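(* Let $(\mathfrak{A},\varphi,\tau)$ be a $*$-dynamical system and let $\mathfrak{T}$ be any $\varphi$-total set in $\mathfrak{A}$. Then: (i) If $(\mathfrak{A},\varphi,\tau)$ is ergodic, then $\left\|\frac1n\sum_{k=0}^{n-1}\tau^k(A)-\varphi(A)\right\|_\varphi\to0$ as $n\to\infty$ for every $A\in\mathfrak{A}$. (ii) If $\left\|\frac1n\sum_{k=0}^{n-1}\tau^k(A)-\varphi(A)\right\|_\varphi\to0$ as $n\to\infty$ for every $A\in\mathfrak{T}$, then $(\mathfrak{A},\varphi,\tau)$ is ergodic.
   Context: All algebras are over $\mathbb{C}$. A state on a unital $*$-algebra $\mathfrak{A}$ is a linear functional $\varphi$ with $\varphi(A^*A)\ge0$ for all $A$ and $\varphi(1)=1$. A $*$-dynamical system is a triple $(\mathfrak{A},\varphi,\tau)$ with $\mathfrak{A}$ a unital $*$-algebra, $\varphi$ a state, and $\tau:\mathfrak{A}\to\mathfrak{A}$ linear with $\tau(1)=1$ and $\varphi(\tau(A)^*\tau(A))\le\varphi(A^*A)$ for all $A$. Let $\|A\|_\varphi=\sqrt{\varphi(A^*A)}$ and identify $\alpha\in\mathbb{C}$ with $\alpha1$. The system is ergodic if for every sequence $(A_n)$ with $\|\tau(A_n)-A_n\|_\varphi\to0$ which is Cauchy for $\|\cdot\|_\varphi$ (for every $\varepsilon>0$ there is $N$ with $\|A_m-A_n\|_\varphi\le\varepsilon$ for $m,n>N$), there is $\alpha\in\mathbb{C}$ with $\|A_n-\alpha\|_\varphi\to0$. A subset of $\mathfrak{A}$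 is $\varphi$-total if its linear span is dense in the seminormed space $(\mathfrak{A},\|\cdot\|_\varphi)$. *)

From HB Require Import structures.
From mathcomp Require Import all_boot all_order all_algebra.
From mathcomp Require Import all_classical all_reals all_analysis.
From mathcomp Require Import complex.
Set Implicit Arguments. Unset Strict Implicit. Unset Printing Implicit Defensive.
Import Order.TTheory GRing.Theory Num.Theory numFieldNormedType.Exports.
Local Open Scope classical_set_scope.
Local Open Scope ring_scope.

Definition is_star_involution (R : realType) (A : algType R[i]) (star : A -> A)
  : Prop :=
  (forall x, star (star x) = x) /\
  (forall (a : R[i]) (x y : A), star (a *: x + y) = (Num.conj a) *: star x + star y) /\
  (forall x y : A, star (x * y) = star y * star x).

Definition is_linear_functional (R : realType) (A : algType R[i]) (phi : A -> R[i])
  : Prop :=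
  forall (a : R[i]) (x y : A), phi (a *: x + y) = a * phi x + phi y.

Definition is_state (R : realType) (A : algType R[i]) (star : A -> A)
  (phi : A -> R[i]) : Prop :=
  is_linear_functional phi /\ (forall x, 0 <= phi (star x * x)) /\ phi 1 = 1.

(* The seminorm ||x||_phi = sqrt (phi (x^* x)); phi(x^* x) is real >= 0. *)
Definition phinorm (R : realType) (A : algType R[i]) (star : A -> A)
  (phi : A -> R[i]) (x : A) : R :=
  Num.sqrt (complex.Re (phi (star x * x))).

Definition is_star_dyn_system (R : realType) (A : algType R[i]) (star : A -> A)
  (phi : A -> R[i]) (tau : A -> A) : Prop :=
  is_star_involution star /\ is_state star phi /\
  (forall (a : R[i]) (x y : A), tau (a *: x + y) = a *: tau x + tau y) /\
  tau 1 = 1 /\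
  (forall x, phi (star (tau x) * tau x) <= phi (star x * x)).

Definition phi_cauchy (R : realType) (A : algType R[i]) (star : A -> A)
  (phi : A -> R[i]) (u : nat -> A) : Prop :=
  forall eps : R, 0 < eps -> exists N : nat, forall m n : nat,
    (N < m)%N -> (N < n)%N -> phinorm star phi (u m - u n) <= eps.

Definition ergodic (R : realType) (A : algType R[i]) (star : A -> A)
  (phi : A -> R[i]) (tau : A -> A) : Prop :=
  forall u : nat -> A,
    (fun n => phinorm star phi (tau (u n) - u n)) @ \oo --> (0 : R) ->
    phi_cauchy star phi u ->
    exists alpha : R[i], (fun n => phinorm star phi (u n - alpha%:A)) @ \oo --> (0 : R).

Definition phi_total (R : realType) (A : algType R[i]) (star : A -> A)
  (phi : A -> R[i]) (T : A -> Prop) : Prop :=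
  forall (x : A) (eps : R), 0 < eps ->
    exists (n : nat) (c : 'I_n -> R[i]) (t : 'I_n -> A),
      (forall i, T (t i)) /\
      phinorm star phi (x - \sum_(i < n) c i *: t i) < eps.

Definition erg_avg_dev (R : realType) (A : algType R[i]) (phi : A -> R[i])
  (tau : A -> A) (x : A) (n : nat) : A :=
  (n%:R)^-1 *: (\sum_(k < n) iter k tau x) - (phi x)%:A.

(* [phi] is [tau]-invariant and [||.||_phi] satisfies the parallelogram law.
   (i) For the Birkhoff means [M_k x], [M_k x - x] is a coboundary [z - tau z],
   and Birkhoff means of coboundaries telescope to 0.  So [||M_k x||]
   eventually approaches the distance [d] from [x] to the coboundaries, while
   half the sum of two means stays at distance [>= d]; by the parallelogram law
   [(M_k x)] is Cauchy.  Its defect [tau (M_k x) - M_k x] is [O(1/k)], so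
   ergodicity yields a scalar limit, which must be [phi x] since
   [phi (M_k x) = phi x].
   (ii) The maps [x |-> M_k x - phi x] are linear and uniformly bounded, so mean
   ergodicity spreads from the span of the total set to all of [A].  For a
   Cauchy sequence [u] of almost invariant vectors, [u_m - phi (u_m)] is small:
   [M_k u_m] is close to [phi (u_m)] for large [k], and to [u_m], as comparing
   with [M_k u_n] for a much later [n] shows.  Then [phi (u_m)] converges, and
   its limit is the scalar limit of [u]. *)

From HB Require Import structures.
From mathcomp Require Import all_boot all_order all_algebra.
From mathcomp Require Import all_classical all_reals all_analysis.
From mathcomp Require Import complex.
From mathcomp Require Import ring lra.
Import Order.TTheory GRing.Theory Num.Theory numFieldNormedType.Exports.
Local Open Scope classical_set_scope.
Local Open Scope complex_scope.
Local Open Scope ring_scope.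

Local Notation Re := complex.Re.
Local Notation Im := complex.Im.

Section ComplexParts.
Context {R : realType}.
Implicit Types (t : R) (z w : R[i]).

Lemma Re_realM t z : Re (t%:C * z) = t * Re z.
Proof. by case: z => a b /=; rewrite mul0r subr0. Qed.

Lemma Re_iM z : Re ('i * z) = - Im z.
Proof. by rewrite mulrC ReiNIm. Qed.

Lemma Im_iM z : Im ('i * z) = Re z.
Proof. by rewrite mulrC ImiRe. Qed.

Lemma conj_real t : Num.conj t%:C = t%:C.
Proof. exact: conjc_real. Qed.

Lemma Re_conj z : Re (Num.conj z) = Re z.
Proof. by case: z. Qed.

Lemma Im_conj z : Im (Num.conj z) = - Im z.
Proof. by case: z. Qed.

Lemma complex_ext z w : Re z = Re w -> Im z = Im w -> z = w.
Proof. by case: z; case: w => /= a b c d -> ->. Qed.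

End ComplexParts.

Section QuadraticInequalities.
Context {R : realFieldType}.

Lemma quadratic_ge0_discr (a b c : R) : 0 <= c ->
  (forall t, 0 <= a + t * b + t ^+ 2 * c) -> b ^+ 2 <= 4 * a * c.
Proof.
move=> c_ge0 quad_ge0.
have [c_gt0|c_le0] := ltP 0 c.
  have := quad_ge0 (- b / (2 * c)).
  have -> : a + - b / (2 * c) * b + (- b / (2 * c)) ^+ 2 * c
          = (4 * a * c - b ^+ 2) / (4 * c) by field; rewrite gt_eqF.
  by rewrite pmulr_lge0 ?invr_gt0 ?mulr_gt0 // subr_ge0.
have c0 : c = 0 by apply/eqP; rewrite eq_le c_le0.
rewrite c0 in quad_ge0 *.
have [-> | b_neq0] := eqVneq b 0; first by rewrite expr0n !mulr0.
have := quad_ge0 (- (a + 1) / b); rewrite !mulr0 addr0 divfK //; lra.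
Qed.

Lemma linear_le_quadratic_eq0 (b c : R) : (forall t, t * b <= t ^+ 2 * c) -> b = 0.
Proof.
move=> lin_le; have c_ge0 : 0 <= c by have := lin_le 1; have := lin_le (-1); lra.
have : (- b) ^+ 2 <= 4 * 0 * c.
  by apply: quadratic_ge0_discr => // t; have := lin_le t; lra.
rewrite mulr0 mul0r sqrrN => b2_le0.
by apply/eqP; rewrite -sqrf_eq0 eq_le b2_le0 sqr_ge0.
Qed.

End QuadraticInequalities.

Section RealSequences.
Context {R : realType}.

Lemma cvg_invn_mulr (c : R) : (fun k : nat => k%:R^-1 * c) @ \oo --> 0.
Proof.
rewrite -(mul0r c); apply: cvgMl.
by rewrite -cvg_shiftS; exact: cvg_harmonic.
Qed.

Lemma cvgn_of_cauchy (v : nat -> R) :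
  (forall e, 0 < e -> exists N, forall m n, (N < m)%N -> (N < n)%N ->
     `|v m - v n| <= e) -> cvgn v.
Proof.
move=> v_cauchy; apply: cauchy_cvg; apply/cauchy_exP => e e_gt0.
have [N vN] := v_cauchy (e / 2) (divr_gt0 e_gt0 (ltr0Sn _ 1)).
exists (v N.+1); exists N.+1 => // n /= Nn.
apply: le_lt_trans (vN _ _ (ltnSn N) Nn) _.
by rewrite ltr_pdivrMr // ltr_pMr // ltr1n.
Qed.

Lemma cvgn_dist0 {v : nat -> R} : cvgn v -> (fun n => `|v n - limn v|) @ \oo --> 0.
Proof.
move=> v_cvg; rewrite -(@normr0 _ R^o) -(subrr (limn v)).
by apply: cvg_norm; exact: cvgB v_cvg (cvg_cst _).
Qed.

Lemma cvg0_ge_norm_eq0 {c : R} {v : nat -> R} :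
  v @ \oo --> 0 -> (\forall n \near \oo, `|c| <= v n) -> c = 0.
Proof.
move=> v_cvg0 c_le; apply/eqP; rewrite -normr_le0.
exact: ler_cvg_to (cvg_cst _) v_cvg0 c_le.
Qed.

End RealSequences.

Section StarAlgebra.
Variables (R : realType) (A : algType R[i]) (star : A -> A) (phi : A -> R[i]).
Hypotheses (star_inv : is_star_involution star) (phi_state : is_state star phi).

HB.instance Definition _ :=
  GRing.isLinear.Build R[i] A A (Num.conj \; *:%R) star star_inv.2.1.
HB.instance Definition _ :=
  GRing.isLinear.Build R[i] A R[i] *%R phi phi_state.1.

Lemma starK : involutive star. Proof. exact: star_inv.1. Qed.

Lemma starM x y : star (x * y) = star y * star x. Proof. exact: star_inv.2.2. Qed.

Lemma star1 : star 1 = 1.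
Proof. by rewrite -[LHS]mulr1 -{2}[1]starK -starM mulr1 starK. Qed.

Lemma phi1 : phi 1 = 1. Proof. exact: phi_state.2.2. Qed.

Lemma phi_ge0 x : 0 <= phi (star x * x). Proof. exact: phi_state.2.1. Qed.

Lemma phi_sqrDZ a b c : phi (star (a + c *: b) * (a + c *: b)) =
  phi (star a * a) + c * phi (star a * b) + Num.conj c * phi (star b * a)
  + Num.conj c * c * phi (star b * b).
Proof.
have -> : star (a + c *: b) * (a + c *: b) = star a * a + c *: (star a * b)
    + Num.conj c *: (star b * a) + (Num.conj c * c) *: (star b * b).
  by rewrite linearD linearZ /= mulrDl !mulrDr -!scalerAl -!scalerAr scalerA !addrA.
by rewrite !linearD !linearZ.
Qed.

Lemma phi_star y : phi (star y) = Num.conj (phi y).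
Proof.
have Im1 := ger0_Im (phi_ge0 (1 + 1 *: y)).
have Imi := ger0_Im (phi_ge0 (1 + 'i *: y)).
rewrite phi_sqrDZ star1 !mul1r !mulr1 phi1 conjC1 !mul1r in Im1.
rewrite phi_sqrDZ star1 !mul1r !mulr1 phi1 conjCi !mulNr -expr2 sqrCi in Imi.
rewrite !raddfD /= (ger0_Im (phi_ge0 y)) in Im1.
rewrite mulN1r opprK !raddfD !raddfN /= !Im_iM (ger0_Im (phi_ge0 y)) in Imi.
by apply: complex_ext; rewrite ?Re_conj ?Im_conj; lra.
Qed.

Lemma phi_star_mul a b : phi (star b * a) = Num.conj (phi (star a * b)).
Proof. by rewrite -phi_star starM starK. Qed.

Local Notation nrm := (phinorm star phi).

Lemma phinorm_ge0 x : 0 <= nrm x. Proof. exact: sqrtr_ge0. Qed.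

Lemma phinorm_sqr x : nrm x ^+ 2 = Re (phi (star x * x)).
Proof. by rewrite sqr_sqrtr //; have := phi_ge0 x; rewrite lecE => /andP[]. Qed.

Lemma phinorm0 : nrm 0 = 0.
Proof. by rewrite /phinorm mulr0 linear0 sqrtr0. Qed.

Lemma phinorm1 : nrm 1 = 1.
Proof. by rewrite /phinorm star1 mulr1 phi1 sqrtr1. Qed.

Lemma phinorm_sqrDZ a b (t : R) : nrm (a + t%:C *: b) ^+ 2 =
  nrm a ^+ 2 + 2 * t * Re (phi (star a * b)) + t ^+ 2 * nrm b ^+ 2.
Proof.
rewrite !phinorm_sqr phi_sqrDZ (phi_star_mul a b) conj_real -rmorphM.
by rewrite !raddfD /= !Re_realM Re_conj -expr2; ring.
Qed.

Lemma phinormZr (t : R) b : nrm (t%:C *: b) = `|t| * nrm b.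
Proof.
rewrite /phinorm linearZ /= conj_real -scalerAl -scalerAr scalerA linearZ /=.
by rewrite -rmorphM Re_realM -expr2 sqrtrM ?sqr_ge0 // sqrtr_sqr.
Qed.

Lemma phinorm_invnZ k b : nrm (k%:R^-1 *: b) = k%:R^-1 * nrm b.
Proof.
by rewrite -(rmorph_nat (real_complex R)) -fmorphV phinormZr ger0_norm.
Qed.

Lemma phinormN a : nrm (- a) = nrm a.
Proof. by rewrite -scaleN1r -(rmorphN1 (real_complex R)) phinormZr normrN1 mul1r. Qed.

Lemma phinorm_iZ b : nrm ('i *: b) = nrm b.
Proof.
rewrite /phinorm linearZ /= -scalerAl -scalerAr scalerA conjCi mulNr -expr2.
by rewrite sqrCi opprK scale1r.
Qed.

Lemma Re_phi_le_phinorm a b : Re (phi (star a * b)) <= nrm a * nrm b.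
Proof.
have : (2 * Re (phi (star a * b))) ^+ 2 <= 4 * nrm a ^+ 2 * nrm b ^+ 2.
  apply: quadratic_ge0_discr => [|t]; first exact: sqr_ge0.
  by rewrite mulrA [t * 2]mulrC -phinorm_sqrDZ sqr_ge0.
set s := Re _; have -> : (2 * s) ^+ 2 = 4 * s ^+ 2 by ring.
rewrite -mulrA -exprMn ler_pM2l // => sqr_le.
have : 0 <= nrm a * nrm b by rewrite mulr_ge0 ?phinorm_ge0.
move: sqr_le; set p := _ * _; nra.
Qed.

Lemma phinormD a b : nrm (a + b) <= nrm a + nrm b.
Proof.
have := phinorm_sqrDZ a b 1; rewrite rmorph1 scale1r mulr1 expr1n mul1r.
have := Re_phi_le_phinorm a b.
have := phinorm_ge0 a; have := phinorm_ge0 b; have := phinorm_ge0 (a + b); nra.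
Qed.

Lemma phinormB a b : nrm (a - b) <= nrm a + nrm b.
Proof. by rewrite -(phinormN b) phinormD. Qed.

Lemma phinormZ c b : nrm (c *: b) <= (`|Re c| + `|Im c|) * nrm b.
Proof.
rewrite {1}[c]complexE scalerDl -scalerA mulrDl.
by apply: le_trans (phinormD _ _) _; rewrite phinorm_iZ !phinormZr.
Qed.

Lemma phinorm_scalar c : nrm c%:A <= `|Re c| + `|Im c|.
Proof. by rewrite -[leRHS]mulr1 -phinorm1 phinormZ. Qed.

Lemma phinorm_sum I (r : seq I) (P : pred I) (f : I -> A) :
  nrm (\sum_(i <- r | P i) f i) <= \sum_(i <- r | P i) nrm (f i).
Proof.
elim/big_rec2: _ => [|i y s _ IH]; first by rewrite phinorm0.
exact: le_trans (phinormD _ _) (lerD _ IH).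
Qed.

Lemma phinorm_parallelogram a b :
  nrm (a + b) ^+ 2 + nrm (a - b) ^+ 2 = 2 * nrm a ^+ 2 + 2 * nrm b ^+ 2.
Proof.
have := phinorm_sqrDZ a b 1; have := phinorm_sqrDZ a b (-1).
by rewrite rmorphN1 rmorph1 scaleN1r scale1r; lra.
Qed.

Lemma Re_phi_le y : `|Re (phi y)| <= nrm y.
Proof.
have := Re_phi_le_phinorm 1 y; have := Re_phi_le_phinorm 1 (- y).
rewrite star1 !mul1r phinorm1 !mul1r phinormN linearN raddfN /=.
by rewrite ler_norml; lra.
Qed.

Lemma Im_phi_le y : `|Im (phi y)| <= nrm y.
Proof. by have := Re_phi_le ('i *: y); rewrite linearZ /= Re_iM normrN phinorm_iZ. Qed.

(* The parallelogram law bounds [nrm (u m - u n) ^+ 2] by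
   [4 (d + eta) ^+ 2 - 4 d ^+ 2 = 4 eta (2 d + eta)]. *)
Lemma phi_cauchy_of_midpoints (u : nat -> A) (d : R) : 0 <= d ->
  (forall m n, (0 < m)%N -> (0 < n)%N -> 2 * d <= nrm (u m + u n)) ->
  (forall eta, 0 < eta -> \forall k \near \oo, nrm (u k) <= d + eta) ->
  phi_cauchy star phi u.
Proof.
move=> d_ge0 mid_ge u_le e e_gt0.
have D_gt0 : 0 < 4 * (2 * d + 1) by rewrite mulr_gt0 // ltr_wpDl ?mulr_ge0.
pose eta := Num.min 1 (e ^+ 2 / (4 * (2 * d + 1))).
have eta_gt0 : 0 < eta by rewrite lt_min ltr01 divr_gt0 ?exprn_gt0.
have eta_le1 : eta <= 1 by rewrite ge_min lexx.
have eta_small : eta * (4 * (2 * d + 1)) <= e ^+ 2.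
  by rewrite -ler_pdivlMr // ge_min lexx orbT.
have [N _ uN] := u_le eta eta_gt0.
exists N => m n Nm Nn.
have := phinorm_parallelogram (u m) (u n).
have := mid_ge m n (leq_ltn_trans (leq0n N) Nm) (leq_ltn_trans (leq0n N) Nn).
have := uN m (ltnW Nm); have := uN n (ltnW Nn).
have := phinorm_ge0 (u m); have := phinorm_ge0 (u n).
have := phinorm_ge0 (u m - u n); have := phinorm_ge0 (u m + u n).
set a := nrm (u m); set b := nrm (u n); set r := nrm (u m - u n).
set s := nrm (u m + u n) => s_ge0 r_ge0 b_ge0 a_ge0 b_le a_le s_ge par.
have : r ^+ 2 <= e ^+ 2 by nra.
by rewrite ler_sqr ?nnegrE ?(ltW e_gt0).
Qed.

Lemma cvgn_phi_cauchy (f : R[i] -> R) (u : nat -> A) :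
  {morph f : z w / z - w} -> (forall y, `|f (phi y)| <= nrm y) ->
  phi_cauchy star phi u -> cvgn (fun m => f (phi (u m))).
Proof.
move=> fB f_le u_cauchy; apply: cvgn_of_cauchy => e e_gt0.
have [N uN] := u_cauchy e e_gt0; exists N => m n Nm Nn.
by rewrite -fB -linearB; exact: le_trans (f_le _) (uN _ _ Nm Nn).
Qed.

Section Dynamics.
Variable tau : A -> A.
Hypotheses (tau_linear : linear tau) (tau1 : tau 1 = 1)
  (tau_contraction : forall x, phi (star (tau x) * tau x) <= phi (star x * x)).

HB.instance Definition _ := GRing.isLinear.Build R[i] A A *:%R tau tau_linear.

Lemma iter_linear k : linear (iter k tau).
Proof. by elim: k => [//|k IH] a x y; rewrite !iterS IH linearP. Qed.

HB.instance Definition _ k :=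
  GRing.isLinear.Build R[i] A A *:%R (iter k tau) (iter_linear k).

Lemma phinorm_sqr_tau x : nrm (tau x) ^+ 2 <= nrm x ^+ 2.
Proof. by rewrite !phinorm_sqr; have := tau_contraction x; rewrite lecE => /andP[]. Qed.

Lemma phinorm_tau x : nrm (tau x) <= nrm x.
Proof. by rewrite -ler_sqr ?nnegrE ?phinorm_ge0 ?phinorm_sqr_tau. Qed.

Lemma phinorm_iter k x : nrm (iter k tau x) <= nrm x.
Proof. by elim: k => [//|k IH]; exact: le_trans (phinorm_tau _) IH. Qed.

(* Contractivity at [1 + t x] leaves no room for a linear term in [t]. *)
Lemma Re_phi_tau x : Re (phi (tau x)) = Re (phi x).
Proof.
suff : 2 * (Re (phi (tau x)) - Re (phi x)) = 0 by lra.
apply: (@linear_le_quadratic_eq0 _ _ (nrm x ^+ 2 - nrm (tau x) ^+ 2)) => t.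
have := phinorm_sqr_tau (1 + t%:C *: x).
by rewrite linearD linearZ /= tau1 !phinorm_sqrDZ star1 !mul1r; lra.
Qed.

Lemma phi_tau x : phi (tau x) = phi x.
Proof.
apply: complex_ext; first exact: Re_phi_tau.
by have := Re_phi_tau ('i *: x); rewrite !linearZ /= !Re_iM => /oppr_inj.
Qed.

Lemma phi_iter k x : phi (iter k tau x) = phi x.
Proof. by elim: k => [//|k IH]; rewrite iterS phi_tau. Qed.

Definition birkhoff_mean k x := k%:R^-1 *: \sum_(j < k) iter j tau x.

Lemma birkhoff_mean_linear k : linear (birkhoff_mean k).
Proof.
move=> a x y; rewrite /birkhoff_mean.
under eq_bigr do rewrite linearP.
by rewrite big_split /= -scaler_sumr scalerDr !scalerA mulrC.
Qed.

HB.instance Definition _ k :=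
  GRing.isLinear.Build R[i] A A *:%R (birkhoff_mean k) (birkhoff_mean_linear k).

Lemma erg_avg_devE x n : erg_avg_dev phi tau x n = birkhoff_mean n x - (phi x)%:A.
Proof. by []. Qed.

Lemma phinorm_birkhoff_mean k x : nrm (birkhoff_mean k x) <= nrm x.
Proof.
rewrite phinorm_invnZ; have [->|k_gt0] := posnP k.
  by rewrite invr0 mul0r phinorm_ge0.
rewrite mulrC ler_pdivrMr ?ltr0n //; apply: le_trans (phinorm_sum _ _ _ _) _.
have -> : nrm x * k%:R = \sum_(j < k) nrm x by rewrite sumr_const card_ord mulr_natr.
by apply: ler_sum => j _; exact: phinorm_iter.
Qed.

Lemma phi_birkhoff_mean k x : (0 < k)%N -> phi (birkhoff_mean k x) = phi x.
Proof.
move=> k_gt0; rewrite linearZ linear_sum /=.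
under eq_bigr do rewrite phi_iter.
by rewrite sumr_const card_ord -[phi x *+ k]mulr_natl mulKf // pnatr_eq0 -lt0n.
Qed.

Lemma birkhoff_mean_tau k x : tau (birkhoff_mean k x) = birkhoff_mean k (tau x).
Proof.
by rewrite linearZ linear_sum /=; under eq_bigr do rewrite -iterS iterSr.
Qed.

Lemma birkhoff_mean_coboundary k z :
  birkhoff_mean k (z - tau z) = k%:R^-1 *: (z - iter k tau z).
Proof.
rewrite /birkhoff_mean; congr (_ *: _).
have -> : \sum_(j < k) iter j tau (z - tau z) =
    - \sum_(0 <= j < k) (iter j.+1 tau z - iter j tau z).
  by rewrite big_mkord -sumrN; apply: eq_bigr => j _; rewrite linearB /= -iterSr opprB.
by rewrite telescope_sumr // opprB.
Qed.

Lemma phinorm_birkhoff_mean_coboundary k z :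
  nrm (birkhoff_mean k (z - tau z)) <= k%:R^-1 * (2 * nrm z).
Proof.
rewrite birkhoff_mean_coboundary phinorm_invnZ ler_wpM2l ?invr_ge0 ?ler0n //.
by apply: le_trans (phinormB _ _) _; have := phinorm_iter k z; lra.
Qed.

Lemma phinorm_tau_birkhoff_mean k x :
  nrm (tau (birkhoff_mean k x) - birkhoff_mean k x) <= k%:R^-1 * (2 * nrm x).
Proof.
rewrite birkhoff_mean_tau -linearB -opprB linearN phinormN.
exact: phinorm_birkhoff_mean_coboundary.
Qed.

Lemma birkhoff_mean_subr k x : (0 < k)%N ->
  birkhoff_mean k x - x = k%:R^-1 *: \sum_(j < k) (iter j tau x - x).
Proof.
move=> k_gt0; rewrite sumrB sumr_const card_ord scalerBr -[x *+ k]scaler_nat scalerA.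
by rewrite mulVf ?scale1r // pnatr_eq0 -lt0n.
Qed.

Lemma iter_subr_telescope j x :
  iter j tau x - x = tau (\sum_(i < j) iter i tau x) - \sum_(i < j) iter i tau x.
Proof.
rewrite linear_sum -sumrB /=.
by rewrite -(big_mkord xpredT (fun i => iter i.+1 tau x - iter i tau x)) telescope_sumr.
Qed.

Lemma birkhoff_mean_subr_coboundary k x : (0 < k)%N ->
  exists z, birkhoff_mean k x - x = z - tau z.
Proof.
move=> k_gt0; exists (- (k%:R^-1 *: \sum_(j < k) \sum_(i < j) iter i tau x)).
rewrite birkhoff_mean_subr // linearN opprK addrC linearZ /= -scalerBr.
rewrite [tau _]linear_sum -sumrB.
by congr (_ *: _); apply: eq_bigr => j _; exact: iter_subr_telescope.
Qed.

Lemma phinorm_iter_subr j y : nrm (iter j tau y - y) <= j%:R * nrm (tau y - y).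
Proof.
elim: j => [|j IH]; first by rewrite subrr phinorm0 mul0r.
have -> : iter j.+1 tau y - y = iter j tau (tau y - y) + (iter j tau y - y).
  by rewrite linearB /= -iterSr addrA subrK.
apply: le_trans (phinormD _ _) _; rewrite -addn1 natrD mulrDl mul1r.
by have := phinorm_iter j (tau y - y); lra.
Qed.

Lemma phinorm_birkhoff_mean_subr k y : (0 < k)%N ->
  nrm (birkhoff_mean k y - y) <= k%:R * nrm (tau y - y).
Proof.
move=> k_gt0; rewrite birkhoff_mean_subr // phinorm_invnZ ler_pdivrMl ?ltr0n //.
apply: le_trans (phinorm_sum _ _ _ _) _.
have -> : k%:R * (k%:R * nrm (tau y - y)) = \sum_(j < k) k%:R * nrm (tau y - y).
  by rewrite sumr_const card_ord mulr_natl.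
apply: ler_sum => j _; apply: le_trans (phinorm_iter_subr _ _) _.
by rewrite ler_wpM2r ?phinorm_ge0 // ler_nat ltnW.
Qed.

Definition dist_coboundaries x := inf (range (fun z => nrm (x + (z - tau z)))).

Lemma has_inf_coboundaries x : has_inf (range (fun z => nrm (x + (z - tau z)))).
Proof.
split; first by exists (nrm (x + (0 - tau 0))); exists 0.
by exists 0 => _ [z _ <-]; exact: phinorm_ge0.
Qed.

Lemma dist_coboundaries_ge0 x : 0 <= dist_coboundaries x.
Proof.
apply: lb_le_inf; first exact: (has_inf_coboundaries x).1.
by move=> _ [z _ <-]; exact: phinorm_ge0.
Qed.

Lemma dist_coboundaries_le x z : dist_coboundaries x <= nrm (x + (z - tau z)).
Proof. by apply: ge_inf; [exact: (has_inf_coboundaries x).2 | exists z]. Qed.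

(* [M_k x] differs from [M_k (x + w)], of norm at most [||x + w||], by the
   telescoping mean of the coboundary [w]. *)
Lemma phinorm_birkhoff_mean_near x eta : 0 < eta ->
  \forall k \near \oo, nrm (birkhoff_mean k x) <= dist_coboundaries x + eta.
Proof.
move=> eta_gt0; have eta2_gt0 : 0 < eta / 2 by rewrite divr_gt0.
have [_ [z _ <-] z_near] := inf_adherent eta2_gt0 (has_inf_coboundaries x).
have cob_small := cvgr_le _ (cvg_invn_mulr (2 * nrm z)) _ eta2_gt0.
near=> k.
have -> : birkhoff_mean k x =
    birkhoff_mean k (x + (z - tau z)) - birkhoff_mean k (z - tau z).
  by rewrite linearD addrK.
apply: le_trans (phinormB _ _) _.
have := phinorm_birkhoff_mean k (x + (z - tau z)).
have : nrm (birkhoff_mean k (z - tau z)) <= eta / 2.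
  apply: le_trans (phinorm_birkhoff_mean_coboundary _ _) _.
  by near: k; exact: cob_small.
rewrite -/(dist_coboundaries x) in z_near; lra.
Unshelve. all: by end_near.
Qed.

Lemma dist_coboundaries_birkhoff_midpoint x m n : (0 < m)%N -> (0 < n)%N ->
  2 * dist_coboundaries x <= nrm (birkhoff_mean m x + birkhoff_mean n x).
Proof.
move=> m_gt0 n_gt0.
have [zm Em] := birkhoff_mean_subr_coboundary _ x m_gt0.
have [zn En] := birkhoff_mean_subr_coboundary _ x n_gt0.
pose z := (2%:R^-1 : R[i]) *: (zm + zn).
have -> : birkhoff_mean m x + birkhoff_mean n x = (2%:R : R)%:C *: (x + (z - tau z)).
  rewrite -(subrK x (birkhoff_mean m x)) -(subrK x (birkhoff_mean n x)) Em En.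
  rewrite /z [tau (_ *: _)]linearZ /= -scalerBr scalerDr rmorph_nat scalerA.
  rewrite mulfV ?pnatr_eq0 // scale1r scaler_nat mulr2n.
  by rewrite linearD opprD addrACA [RHS]addrC; congr (_ + _); exact: addrACA.
by rewrite phinormZr ger0_norm // ler_wpM2l // dist_coboundaries_le.
Qed.

Lemma phi_cauchy_birkhoff_mean x : phi_cauchy star phi (birkhoff_mean ^~ x).
Proof.
apply: phi_cauchy_of_midpoints (dist_coboundaries_ge0 x) _ _.
  exact: dist_coboundaries_birkhoff_midpoint.
exact: phinorm_birkhoff_mean_near.
Qed.

Lemma phinorm_tau_birkhoff_mean_cvg0 x :
  (fun k => nrm (tau (birkhoff_mean k x) - birkhoff_mean k x)) @ \oo --> 0.
Proof.
apply: (squeeze_cvgr _ (cvg_cst 0) (cvg_invn_mulr (2 * nrm x))).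
by apply: nearW => k; rewrite phinorm_ge0 phinorm_tau_birkhoff_mean.
Qed.

Lemma mean_ergodic_of_ergodic : ergodic star phi tau ->
  forall x, (fun n => nrm (erg_avg_dev phi tau x n)) @ \oo --> 0.
Proof.
move=> erg x.
have [al mean_al] :=
  erg _ (phinorm_tau_birkhoff_mean_cvg0 x) (phi_cauchy_birkhoff_mean x).
suff al_phi : al = phi x by rewrite /erg_avg_dev -al_phi.
have phi_mean_al n : (0 < n)%N -> phi (birkhoff_mean n x - al%:A) = phi x - al.
  by move=> n_gt0; rewrite linearB /= phi_birkhoff_mean // linearZ /= phi1 mulr1.
apply/eqP; rewrite eq_sym -subr_eq0; apply/eqP/complex_ext => /=;
  apply: (cvg0_ge_norm_eq0 mean_al); exists 1%N => // n /= n_gt0;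
  rewrite -(phi_mean_al n) //; [exact: Re_phi_le | exact: Im_phi_le].
Qed.

Local Notation dev x n := (erg_avg_dev phi tau x n).

Lemma erg_avg_devB x y n : dev (x - y) n = dev x n - dev y n.
Proof.
rewrite !erg_avg_devE [birkhoff_mean _ _]linearB [phi _]linearB /=.
by rewrite scalerBl !opprD addrACA.
Qed.

Lemma erg_avg_dev_sum m (c : 'I_m -> R[i]) (t : 'I_m -> A) n :
  dev (\sum_(i < m) c i *: t i) n = \sum_(i < m) c i *: dev (t i) n.
Proof.
rewrite erg_avg_devE !linear_sum /= scaler_suml -sumrB; apply: eq_bigr => i _.
by rewrite [birkhoff_mean _ _]linearZ [phi _]linearZ /= -scalerA -scalerBr.
Qed.

Lemma phinorm_erg_avg_dev x n : nrm (dev x n) <= 3 * nrm x.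
Proof.
rewrite erg_avg_devE; apply: le_trans (phinormB _ _) _.
have := phinorm_birkhoff_mean n x; have := phinorm_scalar (phi x).
by have := Re_phi_le x; have := Im_phi_le x; lra.
Qed.

Lemma erg_avg_dev_sum_cvg0 {m} (c : 'I_m -> R[i]) (t : 'I_m -> A) :
  (forall i, (fun n => nrm (dev (t i) n)) @ \oo --> 0) ->
  (fun n => nrm (dev (\sum_(i < m) c i *: t i) n)) @ \oo --> 0.
Proof.
move=> t_cvg0; pose K i := `|Re (c i)| + `|Im (c i)|.
have : (fun n => \sum_(i < m) K i * nrm (dev (t i) n)) @ \oo --> \sum_(i < m) K i * 0.
  by apply: cvg_big => [|i _]; [exact: add_continuous | exact: cvgMr].
rewrite big1 => [sum_cvg0|i _]; last exact: mulr0.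
apply: (squeeze_cvgr _ (cvg_cst 0) sum_cvg0); apply: nearW => n.
rewrite phinorm_ge0 erg_avg_dev_sum /=; apply: le_trans (phinorm_sum _ _ _ _) _.
by apply: ler_sum => i _; exact: phinormZ.
Qed.

Lemma mean_ergodic_of_total (T : A -> Prop) : phi_total star phi T ->
  (forall t, T t -> (fun n => nrm (dev t n)) @ \oo --> 0) ->
  forall x, (fun n => nrm (dev x n)) @ \oo --> 0.
Proof.
move=> T_total T_cvg0 x; apply/cvgr0Pnorm_le => e e_gt0.
have [m [c [t [Tt x_near]]]] := T_total x (e / 6) (divr_gt0 e_gt0 (ltr0n _ 6)).
set s := \sum_(i < m) c i *: t i in x_near.
have e2_gt0 : 0 < e / 2 by rewrite divr_gt0.
have s_cvg0 := erg_avg_dev_sum_cvg0 c t (fun i => T_cvg0 _ (Tt i)).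
have s_small := cvgr_le _ s_cvg0 _ e2_gt0.
near=> n; rewrite ger0_norm ?phinorm_ge0 //.
have -> : dev x n = dev (x - s) n + dev s n by rewrite erg_avg_devB subrK.
apply: le_trans (phinormD _ _) _.
have := phinorm_erg_avg_dev (x - s) n.
have : nrm (dev s n) <= e / 2 by near: n; exact: s_small.
lra.
Unshelve. all: by end_near.
Qed.

Section MeanErgodic.
Hypothesis mean_erg : forall x, (fun n => nrm (dev x n)) @ \oo --> 0.

(* Pick [k] by mean ergodicity at [u m], then [n] so late that
   [||tau (u n) - u n|| <= e / (4 k)]; each of the four pieces below is then
   at most [e / 4]. *)
Lemma phinorm_sub_phi_cvg0 {u : nat -> A} :
  (fun n => nrm (tau (u n) - u n)) @ \oo --> 0 -> phi_cauchy star phi u ->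
  (fun m => nrm (u m - (phi (u m))%:A)) @ \oo --> 0.
Proof.
move=> tau_u u_cauchy; apply/cvgr0Pnorm_le => e e_gt0.
have e4_gt0 : 0 < e / 4 by rewrite divr_gt0.
have [N uN] := u_cauchy _ e4_gt0.
exists N.+1 => // m /= Nm; rewrite ger0_norm ?phinorm_ge0 //.
have [K _ devK] := cvgr_le _ (mean_erg (u m)) _ e4_gt0.
have eK_gt0 : 0 < e / 4 / K.+1%:R by rewrite divr_gt0.
have [n0 _ tau_n] := cvgr_le _ tau_u _ eK_gt0.
pose n := maxn N.+1 n0; pose k := K.+1.
have -> : u m - (phi (u m))%:A = (u m - u n) + (u n - birkhoff_mean k (u n))
    + birkhoff_mean k (u n - u m) + dev (u m) k.
  by rewrite erg_avg_devE linearB /= !addrA !subrK.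
have mn : nrm (u m - u n) <= e / 4 by apply: uN; rewrite // leq_max leqnn.
have Mn : nrm (u n - birkhoff_mean k (u n)) <= e / 4.
  rewrite -phinormN opprB.
  apply: le_trans (phinorm_birkhoff_mean_subr _ _ (ltn0Sn K)) _.
  by rewrite mulrC -ler_pdivlMr ?ltr0n // tau_n //= leq_max leqnn orbT.
have Mnm : nrm (birkhoff_mean k (u n - u m)) <= e / 4.
  by apply: le_trans (phinorm_birkhoff_mean _ _) _; rewrite -phinormN opprB.
have devm := devK k (leqnSn K).
set a := u m - u n in mn *; set b := u n - birkhoff_mean k (u n) in Mn *.
set c := birkhoff_mean k _ in Mnm *; set d := dev _ _ in devm *.
have := phinormD (a + b + c) d; have := phinormD (a + b) c.
by have := phinormD a b; lra.
Qed.

Lemma ergodic_of_mean_ergodic : ergodic star phi tau.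
Proof.
move=> u tau_u u_cauchy.
have Re_cvg := cvgn_phi_cauchy (@complex.Re R) u (raddfB _) Re_phi_le u_cauchy.
have Im_cvg := cvgn_phi_cauchy (@complex.Im R) u (raddfB _) Im_phi_le u_cauchy.
exists (limn (fun m => Re (phi (u m))) +i* limn (fun m => Im (phi (u m)))).
have := cvgD (phinorm_sub_phi_cvg0 tau_u u_cauchy)
  (cvgD (cvgn_dist0 Re_cvg) (cvgn_dist0 Im_cvg)).
rewrite !addr0 => /(_ _ _) bound_cvg0; apply: (squeeze_cvgr _ (cvg_cst 0) bound_cvg0).
apply: nearW => m /=; rewrite phinorm_ge0 /=.
set al := _ +i* _.
have -> : u m - al%:A = (u m - (phi (u m))%:A) + (phi (u m) - al)%:A.
  by rewrite scalerBl addrA subrK.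
apply: le_trans (phinormD _ _) _; rewrite lerD2l.
by apply: le_trans (phinorm_scalar _) _; rewrite !raddfB.
Qed.

End MeanErgodic.

End Dynamics.

End StarAlgebra.

Theorem proposition4p5 (R : realType) (A : algType R[i]) (star : A -> A)
  (phi : A -> R[i]) (tau : A -> A) (T : A -> Prop) :
  is_star_dyn_system star phi tau ->
  phi_total star phi T ->
  (ergodic star phi tau ->
     forall x : A,
       (fun n => phinorm star phi (erg_avg_dev phi tau x n)) @ \oo --> (0 : R)) /\
  ((forall x : A, T x ->
       (fun n => phinorm star phi (erg_avg_dev phi tau x n)) @ \oo --> (0 : R)) ->
     ergodic star phi tau).
Proof.
move=> [star_inv [phi_state [tau_linear [tau1 tau_contraction]]]] T_total.
split; first exact: mean_ergodic_of_ergodic.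
move=> T_cvg0; apply: ergodic_of_mean_ergodic => //.
exact: mean_ergodic_of_total T_total T_cvg0.
Qed.
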